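(* Let $L$ be as in the context, $P$ a cell of $\Lambda(L)$, and $f$ an automorphism of $L$ with $f(P)=P$ which is $P$-direct (so $f$ is induced by a symmetry of the Coxeter graph of $P$). Suppose $v\in\Phi^b$ is a $2$-root (a vertex of the Coxeter graph with $v^2=2$) with $f(v)=v$, let $L_v=\{x\in L: xv=0\}$ and let $f_v$ be the restriction of $f$ to $L_v$. If $f$ is $\mathbb{Z}/3$-reversing, then $f_v$ is $\mathbb{Z}/3$-reversing, and $f_v$ preserves and is $P_v$-direct for some cell $P_v$ of $\Lambda(L_v)$.
   Context: Lattices considered: integral lattices $L$ of signature $(n,1)$ with discriminant group $L^*/L\cong\mathbb{Z}/3\oplus D$, $D$ $2$-periodic; for such $L$, $V_k=\{v\in L:v^2=k,\ 2vw/v^2\in\mathbb{Z}\ \forall w\in L\}$ ($k=2,6$), $\Phi=V_2\cup V_6$, assumed of full rank. $\Lambda(L)=\{x\in L\otimes\mathbb{R}:x^2<0\}/\mathbb{R}^*$, $\Lambda^\sharp(L)=\{x: x^2<0\}/\mathbb{R}_{>0}$; cells of $\Lambda(L)$ are closures of components of the complement of the hyperplanes $v^\perp$, $v\in\Phi$ (the same definitions apply to $L_v$ with its own $V_2,V_6$). A cell $P$ lifts to two opposite pieces $\pm P^\sharp$ in $\Lambda^\sharp$; an automorphism $g$ with $g(P)=P$ is $P$-direct if $g(P^\sharp)=P^\sharp$ and $P$-reversing otherwise. $\Phi^b$ is the set of roots $v\in\Phi$, pairing negatively with an interior point of $P^\sharp$, whose hyperplanes $v^\perp$ support the walls of $P$.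 $g$ is $\mathbb{Z}/3$-direct if it acts trivially on the $3$-primary part of $L^*/L$, and $\mathbb{Z}/3$-reversing otherwise. *)

From HB Require Import structures.
From mathcomp Require Import all_boot all_order all_algebra.
From mathcomp Require Import all_classical all_reals all_analysis.
Set Implicit Arguments. Unset Strict Implicit. Unset Printing Implicit Defensive.
Import Order.TTheory GRing.Theory Num.Theory.
Local Open Scope classical_set_scope.
Local Open Scope ring_scope.

(* Convention: the ambient lattice is Z^m (integer row vectors) with the
   integral symmetric Gram matrix G : b(x,y) = x G y^T.  A (sub)lattice M is
   a subset of Z^m (for L itself M = setT, for L_v it is v^perp).
   Automorphisms act on row vectors on the right: x |-> x *m F. *)

Section Defs.
Variable m : nat.
Implicit Types (G F : 'M[int]_m) (M : set 'rV[int]_m).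

Definition toK (K : pzRingType) (x : 'rV[int]_m) : 'rV[K]_m :=
  map_mx (fun z : int => z%:~R) x.

Arguments toK K x : clear implicits.
Definition bZ G (x y : 'rV[int]_m) : int := (x *m G *m y^T) 0 0.
Definition bK (K : pzRingType) G (x y : 'rV[K]_m) : K :=
  (x *m map_mx (fun z : int => z%:~R) G *m y^T) 0 0.

(* K-span of a set of lattice vectors: M (x) K inside K^m *)
Definition kspan (K : pzRingType) M : set 'rV[K]_m :=
  [set x | exists k (c : 'I_k -> K) (w : 'I_k -> 'rV[int]_m),
     (forall i, M (w i)) /\ x = \sum_(i < k) c i *: toK K (w i)].

Arguments kspan : clear implicits.
Arguments kspan K M _ : clear implicits.
Definition is_kroot G M (k : int) (v : 'rV[int]_m) :=
  M v /\ bZ G v v = k /\ forall w, M w -> (k %| 2 * bZ G v w)%Z.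
Definition Phi G M : set 'rV[int]_m :=
  [set v | is_kroot G M 2 v \/ is_kroot G M 6 v].

Definition lattice_aut G M F :=
  [/\ forall x, M x -> M (x *m F),
      forall y, M y -> exists2 x, M x & x *m F = y
    & forall x y, M x -> M y -> bZ G (x *m F) (y *m F) = bZ G x y].

Definition embQ M : set 'rV[rat]_m := [set toK rat w | w in M].
Definition dual G M : set 'rV[rat]_m :=
  [set x | kspan rat M x /\
     forall y, M y -> exists z : int, bK G x (toK rat y) = z%:~R].

(* g acts trivially on the 3-primary part of M^*/M *)
Definition z3_direct G M F :=
  forall x, dual G M x -> (exists k : nat, embQ M ((3 ^+ k) *: x)) ->
    embQ M (x *m map_mx (fun z : int => z%:~R) F - x).
Definition z3_reversing G M F := ~ z3_direct G M F.

(* M^*/M ~= Z/3 (+) D with D 2-periodic (written out: a class [a] of order 3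
   such that every class differs from a multiple of [a] by a 2-torsion class) *)
Definition disc_Z3_2per G M :=
  exists a, [/\ dual G M a, ~ embQ M a, embQ M (3 *: a) &
    forall x, dual G M x ->
      exists j : int, embQ M (2 *: (x - j%:~R *: a))].

Section Real.
Variable R : realType.

Definition cone G M : set 'rV[R]_m := [set x | kspan R M x /\ bK G x x < 0].
Definition reg G M : set 'rV[R]_m :=
  [set x | cone G M x /\ forall v, Phi G M v -> bK G x (toK R v) != 0].
(* lift P^# in Lambda^#(M) (seen as an R_{>0}-stable cone) of the cell
   containing the regular point x0 *)
Definition chamber G M (x0 : 'rV[R]_m) := connected_component (reg G M : set 'rV[R^o]_m) x0.
Definition cell_lift G M (x0 : 'rV[R]_m) : set 'rV[R]_m :=
  cone G M `&` closure (chamber G M x0 : set 'rV[R^o]_m).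
(* the cell P in Lambda(M), seen as an R^*-stable subset of the cone *)
Definition cell G M (x0 : 'rV[R]_m) : set 'rV[R]_m :=
  cell_lift G M x0 `|` [set - x | x in cell_lift G M x0].

Definition act F (S : set 'rV[R]_m) : set 'rV[R]_m :=
  (fun x => x *m map_mx (fun z : int => z%:~R) F) @` S.

(* Phi^b : roots negative on an interior point of P^#, whose hyperplane
   supports a wall (codimension-one face) of P^# *)
Definition Phi_b G M (x0 : 'rV[R]_m) : set 'rV[int]_m :=
  [set v | [/\ Phi G M v,
     exists2 x, interior (cell_lift G M x0 : set 'rV[R^o]_m) x & bK G x (toK R v) < 0 &
     exists y, [/\ cell_lift G M x0 y, bK G y (toK R v) = 0 &
        \forall z \near (y : 'rV[R^o]_m), (kspan R M z /\ bK G z (toK R v) = 0) ->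
                           cell_lift G M x0 z]]].

Definition full_rank G M := forall x : 'rV[R]_m, kspan R M x -> kspan R (Phi G M) x.

End Real.

Definition Lv G (v : 'rV[int]_m) : set 'rV[int]_m := [set x | bZ G x v = 0].

End Defs.

Definition signature_n1 (R : realType) (n : nat) (G : 'M[int]_n.+1) :=
  G^T = G /\ exists2 P : 'M[R]_n.+1, P \in unitmx &
    P *m map_mx (fun z : int => z%:~R) G *m P^T
    = diag_mx (\row_(i < n.+1) (if i == ord_max then -1 else 1)).

From HB Require Import structures.
From mathcomp Require Import all_boot all_order all_algebra.
From mathcomp Require Import all_classical all_reals all_analysis.
From mathcomp Require Import ring lra.
Import Order.TTheory GRing.Theory Num.Theory.
Import numFieldNormedType.Exports.
Local Open Scope classical_set_scope.
Local Open Scope ring_scope.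
Set Implicit Arguments. Unset Strict Implicit. Unset Printing Implicit Defensive.

(* For the [Z/3] part, a class [x] of the 3-primary part of [L^*/L] gives the
   class of [2 x - (x.v) v] in the 3-primary part of [L_v^*/L_v]; since [F]
   fixes [v], acting trivially on the latter forces acting trivially on the former.

   For the cell, take a point [y0] in the relative interior of the wall [v^perp]
   of [P^#] (given by [v \in Phi^b]).  A root [u] of [L_v] is a root of [L]
   orthogonal to [v], so moving [y0] along [u] stays in the wall and hence in
   [P^#]; thus [y0.u <> 0] and [y0] lies in a chamber [C] of [L_v].  As [F]
   preserves [P^#] and fixes [v], the points [y0] and [F y0] both lie in the
   closure of the chamber of [L], on the same side of every root hyperplane of
   [L_v] and in the same half of the time cone; so the segment [y0, F y0] avoids
   the hyperplanes of [L_v], [F C = C], and [F] preserves the cell of [C] and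
   its lift, with the same argument for [F^-1]. *)

Local Notation intmx K M := (map_mx (fun z : int => (z%:~R : K)) M).

Lemma mx11_trmx (T : Type) (M : 'M[T]_1) : M 0 0 = M^T 0 0.
Proof. by rewrite mxE. Qed.

Section BilinearForm.
Variables (K : comNzRingType) (m : nat) (G : 'M[int]_m).
Implicit Types (x y z : 'rV[K]_m) (a b : 'rV[int]_m).

Lemma toKB a b : toK K (a - b) = toK K a - toK K b.
Proof. exact: map_mxB. Qed.

Lemma toKZ (c : int) a : toK K (c *: a) = c%:~R *: toK K a.
Proof. exact: map_mxZ. Qed.

Lemma toK_mul a (H : 'M[int]_m) : toK K (a *m H) = toK K a *m intmx K H.
Proof. exact: map_mxM. Qed.

Lemma toK_delta (i : 'I_m) : toK K (delta_mx 0 i) = delta_mx 0 i.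
Proof. exact: map_delta_mx. Qed.

Lemma bK_toK a b : bK G (toK K a) (toK K b) = (bZ G a b)%:~R.
Proof. by rewrite /bK /bZ /toK map_trmx -!map_mxM mxE. Qed.

Lemma bKDl x y z : bK G (x + y) z = bK G x z + bK G y z.
Proof. by rewrite /bK !mulmxDl mxE. Qed.

Lemma bKZl (c : K) x z : bK G (c *: x) z = c * bK G x z.
Proof. by rewrite /bK -!scalemxAl mxE. Qed.

Lemma bKBl x y z : bK G (x - y) z = bK G x z - bK G y z.
Proof. by rewrite bKDl -scaleN1r bKZl mulN1r. Qed.

Lemma bK_suml k (f : 'I_k -> 'rV[K]_m) z :
  bK G (\sum_(i < k) f i) z = \sum_(i < k) bK G (f i) z.
Proof.
elim: k f => [|k IHk] f; first by rewrite !big_ord0 /bK !mul0mx mxE.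
by rewrite !big_ord_recr bKDl IHk.
Qed.

Lemma bZDl a b (c : 'rV[int]_m) : bZ G (a + b) c = bZ G a c + bZ G b c.
Proof. by rewrite /bZ !mulmxDl mxE. Qed.

Lemma bZZl (k : int) a b : bZ G (k *: a) b = k * bZ G a b.
Proof. by rewrite /bZ -!scalemxAl mxE. Qed.

Lemma bZBl a b (c : 'rV[int]_m) : bZ G (a - b) c = bZ G a c - bZ G b c.
Proof. by rewrite bZDl -scaleN1r bZZl mulN1r. Qed.

Hypothesis Gsym : G^T = G.

Lemma bK_sym x y : bK G x y = bK G y x.
Proof. by rewrite /bK [LHS]mx11_trmx !trmx_mul trmxK map_trmx Gsym mulmxA. Qed.

Lemma bZ_sym a b : bZ G a b = bZ G b a.
Proof. by rewrite /bZ [LHS]mx11_trmx !trmx_mul trmxK Gsym mulmxA. Qed.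

Lemma bKZr (c : K) x z : bK G z (c *: x) = c * bK G z x.
Proof. by rewrite !(bK_sym z) bKZl. Qed.

Lemma bKDr x y z : bK G z (x + y) = bK G z x + bK G z y.
Proof. by rewrite !(bK_sym z) bKDl. Qed.

Lemma bKBr x y z : bK G z (x - y) = bK G z x - bK G z y.
Proof. by rewrite !(bK_sym z) bKBl. Qed.

End BilinearForm.

Lemma kspan_setT (K : comNzRingType) m (x : 'rV[K]_m) : kspan (K:=K) setT x.
Proof.
exists m, (fun i => x 0 i), (fun i => delta_mx 0 i); split => //.
by rewrite {1}(row_sum_delta x); apply: eq_bigr => i _; rewrite toK_delta.
Qed.

Section Isometry.
Variables (m : nat) (G H : 'M[int]_m).
Hypothesis isoH : H *m G *m H^T = G.

Lemma bZ_mulmx a b : bZ G (a *m H) (b *m H) = bZ G a b.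
Proof.
rewrite /bZ trmx_mul -!mulmxA [H *m (G *m _)]mulmxA [H *m G *m _]mulmxA.
by rewrite isoH.
Qed.

Lemma bK_mulmx (K : comNzRingType) (x y : 'rV[K]_m) :
  bK G (x *m intmx K H) (y *m intmx K H) = bK G x y.
Proof.
rewrite /bK trmx_mul -!mulmxA [intmx K H *m (_ *m _)]mulmxA.
by rewrite [intmx K H *m _ *m _]mulmxA map_trmx -!map_mxM isoH.
Qed.

Lemma isometry_invmx : H \in unitmx -> invmx H *m G *m (invmx H)^T = G.
Proof.
move=> unitH; rewrite -[in LHS]isoH !mulmxA mulVmx // mul1mx.
by rewrite -mulmxA -trmx_mul mulVmx // trmx1 mulmx1.
Qed.

End Isometry.

Lemma lattice_aut_isometry m (G F : 'M[int]_m) :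
  lattice_aut G setT F -> F *m G *m F^T = G.
Proof.
case=> _ _ isoF; apply/matrixP => i j.
have unit_entry (M : 'M[int]_m) : bZ M (delta_mx 0 i) (delta_mx 0 j) = M i j.
  by rewrite /bZ -rowE trmx_delta -colE !mxE.
by rewrite -[LHS]unit_entry -[RHS]unit_entry -(isoF _ _ I I) /bZ trmx_mul !mulmxA.
Qed.

Lemma lattice_aut_unitmx m (G F : 'M[int]_m) : lattice_aut G setT F -> F \in unitmx.
Proof.
case=> _ surjF _.
have preimage i : exists x : 'rV[int]_m, x *m F = delta_mx 0 i.
  by have [x _ xF] := surjF (delta_mx 0 i) I; exists x.
pose Fi := \matrix_i projT1 (cid (preimage i)).
have FiF : Fi *m F = 1%:M.
  by apply/row_matrixP => i; rewrite row_mul rowK row1; case: cid.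
exact: (mulmx1_unit FiF).2.
Qed.

Section OrthogonalSublattice.
Variables (m : nat) (G : 'M[int]_m) (v : 'rV[int]_m).
Hypothesis vv2 : bZ G v v = 2.

Lemma Lv_proj2 w : Lv G v (2 *: w - bZ G w v *: v).
Proof. by rewrite /Lv /= bZBl !bZZl vv2 mulrC subrr. Qed.

Lemma kspan_LvE (K : numFieldType) (x : 'rV[K]_m) :
  kspan (K:=K) (Lv G v) x <-> bK G x (toK K v) = 0.
Proof.
split=> [[k [c [w [Lw ->]]]]|xv0].
  rewrite bK_suml big1 // => i _.
  by rewrite bKZl bK_toK (Lw i) mulr0.
pose b i := bZ G (delta_mx 0 i) v.
have xvE : bK G x (toK K v) = \sum_i x 0 i * (b i)%:~R.
  rewrite {1}(row_sum_delta x) bK_suml; apply: eq_bigr => i _.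
  by rewrite bKZl -(toK_delta K) bK_toK.
exists m, (fun i => x 0 i / 2), (fun i => 2 *: delta_mx 0 i - b i *: v).
split=> [i|]; first exact: Lv_proj2.
under eq_bigr => i _ do rewrite toKB !toKZ toK_delta scalerBr !scalerA
  divfK ?pnatr_eq0 // mulrAC.
rewrite sumrB -row_sum_delta -scaler_suml -mulr_suml -xvE xv0.
by rewrite mul0r scale0r subr0.
Qed.

Hypothesis Gsym : G^T = G.

Lemma Phi_Lv_sub u : Phi G (Lv G v) u -> Phi G setT u.
Proof.
have proj2_dot k w : is_kroot G (Lv G v) k u ->
    bZ G u (2 *: w - bZ G w v *: v) = 2 * bZ G u w.
  case=> Lu _; rewrite bZ_sym // bZBl !bZZl (bZ_sym _ v) // Lu mulr0 subr0.
  by rewrite bZ_sym.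
case=> [[Lu [uu2 _]]|[Lu [uu6 div6]]]; [left|right]; split=> //; split=> // w _.
  exact/dvdz_mulr/dvdzz.
have /dvdzP[q Hq] := div6 _ (Lv_proj2 w).
rewrite (proj2_dot 6) // in Hq; apply/dvdzP; exists (bZ G u w - q).
by rewrite mulrBl -Hq; ring.
Qed.

End OrthogonalSublattice.

Section IsometryFixingRoot.
Variables (m : nat) (G H : 'M[int]_m) (v : 'rV[int]_m).
Hypotheses (isoH : H *m G *m H^T = G) (unitH : H \in unitmx) (vH : v *m H = v).

Lemma Lv_mul w : Lv G v w -> Lv G v (w *m H).
Proof. by rewrite /Lv /= -{2}vH bZ_mulmx. Qed.

Lemma Lv_mulV w : Lv G v w -> Lv G v (w *m invmx H).
Proof.
have vHi : v *m invmx H = v by rewrite -{1}vH mulmxK.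
by rewrite /Lv /= -{2}vHi bZ_mulmx // isometry_invmx.
Qed.

Lemma Phi_Lv_mul u : Phi G (Lv G v) u -> Phi G (Lv G v) (u *m H).
Proof.
have kroot_mul k : is_kroot G (Lv G v) k u -> is_kroot G (Lv G v) k (u *m H).
  case=> Lu [uuk divk]; split; first exact: Lv_mul.
  split=> [|w Lw]; first by rewrite bZ_mulmx.
  by rewrite -(mulmxKV unitH w) bZ_mulmx //; apply/divk/Lv_mulV.
by case=> ?; [left|right]; apply: kroot_mul.
Qed.

Hypothesis vv2 : bZ G v v = 2.

Lemma cone_Lv_mul (R : realType) (x : 'rV[R]_m) :
  cone G (Lv G v) x -> cone G (Lv G v) (x *m intmx R H).
Proof.
case=> /(kspan_LvE vv2) xv0 xx; split; last by rewrite bK_mulmx.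
by apply/(kspan_LvE vv2); rewrite -vH toK_mul bK_mulmx.
Qed.

End IsometryFixingRoot.

Lemma reg_Lv_mul (R : realType) m (G H : 'M[int]_m) (v : 'rV[int]_m) (x : 'rV[R]_m) :
    H *m G *m H^T = G -> H \in unitmx -> v *m H = v -> bZ G v v = 2 ->
  reg G (Lv G v) x -> reg G (Lv G v) (x *m intmx R H).
Proof.
move=> isoH unitH vH vv2 [xcone xreg]; split; first exact: cone_Lv_mul.
move=> u Phiu; rewrite -(mulmxKV unitH u) toK_mul bK_mulmx //.
apply: xreg; apply: Phi_Lv_mul Phiu; rewrite ?unitmx_inv ?isometry_invmx //.
by rewrite -{1}vH mulmxK.
Qed.

(* Since [3^k] is odd, [x F - x] is an integral combination of [3^k (x F - x)]
   and of [2 (x F - x)], the defect of the [L_v]-dual vector [2 x - (x.v) v]. *)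
Lemma z3_direct_of_Lv m (G F : 'M[int]_m) (v : 'rV[int]_m) :
    G^T = G -> bZ G v v = 2 -> v *m F = v ->
  z3_direct G (Lv G v) F -> z3_direct G setT F.
Proof.
move=> Gsym vv2 vF directLv x [_ xdual] [k [w _ wE]].
have [z0 xv] := xdual v I.
pose N := (3 ^ k)%N.
have N3 : 3 ^+ k = N%:R :> rat by rewrite natrX.
pose y := 2 *: x - z0%:~R *: toK rat v.
pose u := 2 *: w - (N%:Z * z0) *: v.
have uE : toK rat u = 3 ^+ k *: y.
  rewrite toKB !toKZ wE N3 scalerBr !scalerA rmorphM /=.
  by rewrite [_ * N%:R]mulrC.
have yv0 : bK G y (toK rat v) = 0.
  by rewrite bKBl !bKZl xv bK_toK vv2 mulrC subrr.
have Lu : Lv G v u.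
  by apply/(@intr_inj rat); rewrite /= -(bK_toK rat) uE bKZl yv0 mulr0.
have ydual : dual G (Lv G v) y.
  split=> [|a La]; first exact/kspan_LvE.
  have [z1 xa] := xdual a I.
  exists (2 * z1); rewrite bKBl !bKZl xa bK_toK bZ_sym // La.
  by rewrite mulr0 subr0 rmorphM.
have [u' _ u'E] := directLv y ydual (ex_intro _ k (ex_intro2 _ _ u Lu uE)).
have yF : y *m intmx rat F - y = 2 *: (x *m intmx rat F - x).
  rewrite mulmxBl -!scalemxAl -toK_mul vF scalerBr.
  by rewrite opprB addrA subrK.
have wF : N%:R *: (x *m intmx rat F - x) = toK rat (w *m F - w).
  by rewrite toKB toK_mul wE N3 scalerBr scalemxAl.
exists (w *m F - w - (N./2)%:Z *: u') => //.
have N_odd : odd N by rewrite /N oddX orbT.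
rewrite toKB toKZ u'E yF -wF scalerA.
have -> : (N./2)%:Z%:~R * 2 = N%:R - 1 :> rat.
  rewrite -{2}(odd_double_half N) N_odd.
  by rewrite natrD addrC addKr -muln2 natrM.
by rewrite scalerBl scale1r opprB addrC subrK.
Qed.

Section Topology.
Variable R : realType.

Lemma mulmx_continuous m p (M : 'M[R]_(m, p)) :
  continuous (fun x : 'rV[R^o]_m => (x *m M : 'rV[R^o]_p)).
Proof.
have -> : (fun x : 'rV[R^o]_m => (x *m M : 'rV[R^o]_p)) =
    (fun x => \sum_(i < m) x 0 i *: (row i M : 'rV[R^o]_p)).
  by apply: funext => x; rewrite mulmx_sum_row.
apply: continuous_big => [|i _]; first exact: add_continuous.
by move=> x; apply: continuousZr_tmp; exact: coord_continuous.
Qed.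

Lemma bK_continuous m (G : 'M[int]_m) (c : 'rV[R]_m) :
  continuous (fun x : 'rV[R^o]_m => (bK G x c : R^o)).
Proof.
have -> : (fun x : 'rV[R^o]_m => (bK G x c : R^o)) =
    (fun M : 'M[R^o]_1 => M 0 0) \o (fun x => x *m (intmx R G *m c^T)).
  by apply: funext => x; rewrite /bK /= mulmxA.
move=> x; apply: continuous_comp; first exact: mulmx_continuous.
exact: coord_continuous.
Qed.

Lemma segment_connected_component m (A : set 'rV[R^o]_m) (y z : 'rV[R^o]_m) :
    (forall t : R, 0 <= t <= 1 -> A ((1 - t) *: y + t *: z)) ->
  connected_component A y z.
Proof.
move=> segA; pose seg (t : R^o) := ((1 - t) *: y + t *: z : 'rV[R^o]_m).
have seg_cont : continuous seg.
  have -> : seg = (fun t => (1 - t) *: y) + (fun t => t *: z) by [].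
  move=> t; apply: continuousD; apply: continuousZr_tmp => //.
  have -> : (fun t : R^o => 1 - t) = cst 1 - id by [].
  by apply: continuousB => //; exact: cvg_cst.
have seg01 : seg @` `[(0 : R), 1] `<=` A.
  by move=> _ [t t01 <-]; apply: segA; move: t01; rewrite /= in_itv.
have seg0 : seg 0 = y by rewrite /seg subr0 scale1r scale0r addr0.
have seg1 : seg 1 = z by rewrite /seg subrr scale0r scale1r add0r.
apply: (connected_component_max (B := seg @` `[(0 : R), 1])) => //.
- by rewrite -seg0; exists 0; rewrite //= in_itv /= lexx ler01.
- apply: connected_continuous_connected; first exact: segment_connected.
  exact: continuous_subspaceT.
- by rewrite -seg1; exists 1; rewrite //= in_itv /= lexx ler01.
Qed.

Section Invariance.
Variables (T : topologicalType) (f : T -> T).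
Hypothesis f_cont : continuous f.

Lemma closure_invariant (A : set T) :
  (forall x, A x -> A (f x)) -> forall x, closure A x -> closure A (f x).
Proof.
move=> fA x Ax B /f_cont /Ax [a [Aa Ba]].
by exists (f a); split => //; exact: fA.
Qed.

Lemma connected_component_invariant (A : set T) x :
    (forall y, A y -> A (f y)) -> connected_component A x (f x) ->
  forall y, connected_component A x y -> connected_component A x (f y).
Proof.
move=> fA xfx y xy.
rewrite (same_connected_component xfx).
apply: (connected_component_max (B := f @` connected_component A x)).
- exists x => //; apply: connected_component_refl.
  exact: connected_component_sub (connected_component_sym xy).
- by move=> _ [w xw <-]; apply/fA/(connected_component_sub xw).
- apply: connected_continuous_connected; first exact: component_connected.
  exact: continuous_subspaceT.
- by exists y.
Qed.

End Invariance.

Section SignOnConnected.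
Variables (T : topologicalType) (f : T -> R^o) (A : set T) (x0 : T).
Hypotheses (f_cont : continuous f) (A_conn : connected A) (Ax0 : A x0).
Hypothesis f_neq0 : forall w, A w -> f w != 0.

Lemma connected_sign w : A w -> 0 < f w * f x0.
Proof.
move=> Aw; rewrite ltNge; apply/negP => fwx0.
have /connected_intervalP fA_itv : connected (f @` A).
  exact/connected_continuous_connected/continuous_subspaceT.
have [a Aa fa0] : (f @` A) 0.
  have [fw_le|fx0_lt] := leP (f w) (f x0).
    by apply: (fA_itv (f w) (f x0)); [exists w|exists x0|apply/andP; split; nra].
  by apply: (fA_itv (f x0) (f w)); [exists x0|exists w|apply/andP; split; nra].
by have := f_neq0 Aa; rewrite fa0 eqxx.
Qed.

Lemma closure_connected_sign z : closure A z -> 0 <= f z * f x0.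
Proof.
have closed_sign : closed [set z | 0 <= f z * f x0].
  rewrite (_ : mkset _ = (fun z => f z *: f x0) @^-1` [set r : R^o | 0 <= r]) //.
  apply: preimage_closed; last exact: closed_ge.
  by move=> y _; apply: continuousZr_tmp; exact: f_cont.
move/(closureS (fun w Aw => ltW (connected_sign Aw))).
by rewrite -(closure_id _).1.
Qed.

End SignOnConnected.

Lemma eq0_of_near0_mul_ge0 (c : R) : (\forall t \near (0 : R^o), 0 <= t * c) -> c = 0.
Proof.
case/nbhs_ballP => e e0 sign_c; set t := e / 2.
have t0 : 0 < t by rewrite divr_gt0.
have ball_e s : `|s| = t -> ball (0 : R^o) e s.
  move=> st; rewrite -ball_normE /ball_ /= sub0r normrN st.
  by rewrite ltr_pdivrMr // ltr_pMr // ltr1n.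
have /sign_c /= c_ge0 := ball_e t (gtr0_norm t0).
have /sign_c /= c_le0 := ball_e (- t) (etrans (normrN t) (gtr0_norm t0)).
move: c_ge0 c_le0; rewrite mulNr oppr_ge0 (pmulr_rge0 _ t0) (pmulr_rle0 _ t0).
by move=> c_ge0 c_le0; apply/eqP; rewrite eq_le c_le0 c_ge0.
Qed.

End Topology.

(* In coordinates diagonalizing the form, timelike vectors have a nonzero last
   coordinate; the combination of [x] and [y] killing it has nonnegative norm,
   which is impossible when [x.y = 0]. *)
Lemma timelike_dot_neq0 (R : realType) n (G : 'M[int]_n.+1) :
  signature_n1 R G ->
  forall x y : 'rV[R]_n.+1, bK G x x < 0 -> bK G y y < 0 -> bK G x y != 0.
Proof.
case=> Gsym [P unitP PGP] x y xx yy.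
pose last_coord (w : 'rV[R]_n.+1) := (w *m invmx P) 0 ord_max.
have ge0_of_last0 w : last_coord w = 0 -> 0 <= bK G w w.
  rewrite /last_coord -{2 3}(mulmxKV unitP w); move: (w *m invmx P) => c c_last.
  rewrite /bK trmx_mul -!mulmxA [P *m (_ *m _)]mulmxA [P *m _ *m _]mulmxA PGP.
  rewrite mulmxA mul_mx_diag mxE; apply: sumr_ge0 => j _; rewrite !mxE.
  by case: eqP => [->|_]; rewrite ?c_last ?mul0r // mulr1 -expr2 sqr_ge0.
have last_neq0 w : bK G w w < 0 -> last_coord w != 0.
  by move=> ww; apply/eqP => /ge0_of_last0; rewrite leNgt ww.
have lastB a b w w' : last_coord (a *: w - b *: w') = a * last_coord w - b * last_coord w'.
  by rewrite /last_coord mulmxBl -!scalemxAl !mxE.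
have := ge0_of_last0 (last_coord y *: x - last_coord x *: y).
rewrite lastB mulrC subrr => /(_ erefl).
rewrite !bKBl !bKZl !(bKBr Gsym) !(bKZr Gsym) (bK_sym Gsym y x).
apply: contraTneq => ->; rewrite -ltNge.
have := last_neq0 _ xx; have := last_neq0 _ yy.
move: (last_coord x) (last_coord y) => lx ly ly0 lx0.
have lx2 : 0 < lx * lx by rewrite lt0r mulf_neq0 //= -expr2 sqr_ge0.
have ly2 : 0 < ly * ly by rewrite lt0r mulf_neq0 //= -expr2 sqr_ge0.
nra.
Qed.

Lemma convex_comb_gt0 (R : realFieldType) (t p q : R) :
  0 <= t <= 1 -> 0 < p -> 0 < q -> 0 < (1 - t) * p + t * q.
Proof. by case/andP=> t0 t1 p0 q0; have [pq|qp] := lerP p q; nra. Qed.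

Section ChamberClosure.
Variables (R : realType) (m : nat) (G : 'M[int]_m) (x0 : 'rV[R]_m).
Hypotheses (Gsym : G^T = G) (x0reg : reg G setT x0).
Hypothesis timelike_dot :
  forall x y : 'rV[R]_m, bK G x x < 0 -> bK G y y < 0 -> bK G x y != 0.
Local Notation C0 := (chamber G setT x0).

Lemma closure_chamber_sign (c : 'rV[R]_m) z :
    (forall w, reg G setT w -> bK G w c != 0) -> closure C0 z ->
  0 <= bK G z c * bK G x0 c.
Proof.
move=> c_reg; apply: (closure_connected_sign (f := fun w : 'rV[R^o]_m => (bK G w c : R^o))).
- exact: bK_continuous.
- exact: component_connected.
- exact: connected_component_refl.
- by move=> w /connected_component_sub; exact: c_reg.
Qed.

Lemma closure_chamber_root_sign u z : Phi G setT u -> closure C0 z ->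
  0 <= bK G z (toK R u) * bK G x0 (toK R u).
Proof. by move=> Phiu; apply: closure_chamber_sign => w [_]; apply. Qed.

Lemma closure_chamber_dot_lt0 y z : bK G y y < 0 -> bK G z z < 0 ->
  closure C0 y -> closure C0 z -> bK G y z < 0.
Proof.
move=> yy zz C0y C0z.
have timelike_sign w : closure C0 w -> 0 <= bK G w y * bK G x0 y.
  by apply: closure_chamber_sign => w' [[_ w'w'] _]; exact: timelike_dot.
have x0y : bK G x0 y < 0.
  have x0x0 : bK G x0 x0 < 0 by case: x0reg => -[].
  have := timelike_sign _ C0y; have := timelike_dot x0x0 yy; nra.
have := timelike_sign _ C0z; have := timelike_dot zz yy.
rewrite (bK_sym Gsym z y); nra.
Qed.

Variable v : 'rV[int]_m.
Hypothesis vv2 : bZ G v v = 2.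

Lemma segment_reg_Lv y z (t : R) : reg G (Lv G v) y -> reg G (Lv G v) z ->
    closure C0 y -> closure C0 z -> 0 <= t <= 1 ->
  reg G (Lv G v) ((1 - t) *: y + t *: z).
Proof.
move=> [[/(kspan_LvE vv2) yv0 yy] yreg] [[/(kspan_LvE vv2) zv0 zz] zreg] C0y C0z t01.
have /andP[t0 t1] := t01; split; first split.
- by apply/(kspan_LvE vv2); rewrite bKDl !bKZl yv0 zv0 !mulr0 addr0.
- rewrite bKDl !bKZl !(bKDr Gsym) !(bKZr Gsym) (bK_sym Gsym z y).
  have yz := closure_chamber_dot_lt0 yy zz C0y C0z.
  have tt : 0 <= t * t by nra.
  have ss : 0 <= (1 - t) * (1 - t) by nra.
  have ts : 0 <= t * (1 - t) by nra.
  have [t_le|t_gt] := lerP t (1 / 2).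
    have ss_gt0 : 0 < (1 - t) * (1 - t) by nra.
    nra.
  have tt_gt0 : 0 < t * t by nra.
  nra.
- move=> u Phiu; have PhiLu := Phi_Lv_sub vv2 Gsym Phiu.
  have x0u : bK G x0 (toK R u) != 0 by case: x0reg => _; apply.
  have ys : 0 < bK G y (toK R u) * bK G x0 (toK R u).
    by rewrite lt0r mulf_neq0 ?yreg ?closure_chamber_root_sign.
  have zs : 0 < bK G z (toK R u) * bK G x0 (toK R u).
    by rewrite lt0r mulf_neq0 ?zreg ?closure_chamber_root_sign.
  rewrite bKDl !bKZl; apply/eqP => segu0.
  have := convex_comb_gt0 t01 ys zs.
  by rewrite !mulrA -mulrDl segu0 mul0r ltxx.
Qed.

Section Wall.
Variable y0 : 'rV[R]_m.
Hypotheses (y0_cell : cell_lift G setT x0 y0) (y0v : bK G y0 (toK R v) = 0).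
Hypothesis y0_wall : \forall z \near (y0 : 'rV[R^o]_m),
  (kspan (K:=R) setT z /\ bK G z (toK R v) = 0) -> cell_lift G setT x0 z.

(* If [y0.u = 0], the points [y0 + t u] stay in the wall, hence in the closure
   of the chamber of [x0], for small [t] of either sign; there [(y0 + t u).u]
   is [t u.u], which cannot have the sign of [x0.u] for both signs of [t]. *)
Lemma wall_point_reg_Lv : reg G (Lv G v) y0.
Proof.
case: y0_cell => -[_ y0y0] C0y0.
split=> [|u Phiu]; first by split=> //; exact/(kspan_LvE vv2).
apply/eqP => y0u; have PhiLu := Phi_Lv_sub vv2 Gsym Phiu.
have uv : bK G (toK R u) (toK R v) = 0.
  by case: Phiu => -[Lu _]; rewrite bK_toK Lu.
have uu_gt0 : 0 < bK G (toK R u) (toK R u).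
  by rewrite bK_toK; case: Phiu => -[_ [-> _]]; rewrite ltr0n.
have x0u : bK G x0 (toK R u) != 0 by case: x0reg => _; apply.
pose g (t : R^o) := (y0 + t *: toK R u : 'rV[R^o]_m).
have g_cont : continuous g.
  have -> : g = cst y0 + (fun t : R^o => t *: (toK R u : 'rV[R^o]_m)) by [].
  move=> t; apply: continuousD; first exact: cvg_cst.
  exact: continuousZr_tmp.
have near_wall : \forall t \near (0 : R^o),
    (kspan (K:=R) setT (g t) /\ bK G (g t) (toK R v) = 0) -> cell_lift G setT x0 (g t).
  have near_g0 : nbhs (g 0) [set z | (kspan (K:=R) setT z /\
      bK G z (toK R v) = 0) -> cell_lift G setT x0 z].
    by rewrite /g scale0r addr0.
  exact: (g_cont 0 _ near_g0).
have near_cell : \forall t \near (0 : R^o), cell_lift G setT x0 (g t).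
  apply: filterS near_wall => t; apply; split; first exact: kspan_setT.
  by rewrite /g bKDl bKZl y0v uv mulr0 addr0.
have : \forall t \near (0 : R^o), 0 <= t * (bK G (toK R u) (toK R u) * bK G x0 (toK R u)).
  apply: filterS near_cell => t [_ /(closure_chamber_root_sign PhiLu)].
  by rewrite /g bKDl bKZl y0u add0r mulrA.
move/eq0_of_near0_mul_ge0/eqP; rewrite mulf_eq0 (negbTE x0u) orbF.
by rewrite gt_eqF.
Qed.

Variable H : 'M[int]_m.
Hypotheses (isoH : H *m G *m H^T = G) (unitH : H \in unitmx) (vH : v *m H = v).
Hypothesis y0H_cell : cell_lift G setT x0 (y0 *m intmx R H).

Lemma chamber_Lv_mul w :
  chamber G (Lv G v) y0 w -> chamber G (Lv G v) y0 (w *m intmx R H).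
Proof.
move: w; apply: (connected_component_invariant (mulmx_continuous (M := intmx R H))
  (A := reg G (Lv G v) : set 'rV[R^o]_m)).
  by move=> x; exact: reg_Lv_mul.
have y0reg := wall_point_reg_Lv.
apply: segment_connected_component => t t01.
apply: segment_reg_Lv => //; first exact: reg_Lv_mul.
  exact: y0_cell.2.
exact: y0H_cell.2.
Qed.

Lemma cell_lift_Lv_mul x :
  cell_lift G (Lv G v) y0 x -> cell_lift G (Lv G v) y0 (x *m intmx R H).
Proof.
case=> xcone C1x; split; first exact: cone_Lv_mul.
exact: (closure_invariant (mulmx_continuous (M := intmx R H)) chamber_Lv_mul).
Qed.

Lemma cell_Lv_mul x : cell G (Lv G v) y0 x -> cell G (Lv G v) y0 (x *m intmx R H).
Proof.
case=> [lift_x|[w lift_w <-]]; [left|right]; first exact: cell_lift_Lv_mul.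
by exists (w *m intmx R H); rewrite ?mulNmx //; exact: cell_lift_Lv_mul.
Qed.

End Wall.

End ChamberClosure.

Lemma act_invariant (R : realType) m (F : 'M[int]_m) (S : set 'rV[R]_m) :
    F \in unitmx -> (forall x, S x -> S (x *m intmx R F)) ->
    (forall x, S x -> S (x *m intmx R (invmx F))) ->
  act F S = S.
Proof.
move=> unitF SF SFi; apply/seteqP; split=> [_ [x Sx <-]|x Sx]; first exact: SF.
exists (x *m intmx R (invmx F)); first exact: SFi.
by rewrite -mulmxA -map_mxM mulVmx // map_mx1 mulmx1.
Qed.

Unset Implicit Arguments.

Theorem lemma7p6p1 (R : realType) (n : nat) (G F : 'M[int]_n.+1)
    (x0 : 'rV[R]_n.+1) (v : 'rV[int]_n.+1) :
  signature_n1 R G ->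
  disc_Z3_2per G setT ->
  full_rank R G setT ->
  reg G setT x0 ->
  lattice_aut G setT F ->
  act F (cell G setT x0) = cell G setT x0 ->
  act F (cell_lift G setT x0) = cell_lift G setT x0 ->
  Phi_b G setT x0 v ->
  bZ G v v = 2 ->
  v *m F = v ->
  z3_reversing G setT F ->
  z3_reversing G (Lv G v) F /\
  exists y0 : 'rV[R]_n.+1,
    [/\ reg G (Lv G v) y0,
        act F (cell G (Lv G v) y0) = cell G (Lv G v) y0 &
        act F (cell_lift G (Lv G v) y0) = cell_lift G (Lv G v) y0].
Proof.
move=> sigG _ _ x0reg autF _ liftF [_ _ [y [y_cell yv y_wall]]] vv2 vF reversing.
have Gsym : G^T = G := sigG.1.
split; first by move/(z3_direct_of_Lv Gsym vv2 vF).
have timelike := timelike_dot_neq0 sigG.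
have isoF := lattice_aut_isometry autF.
have unitF := lattice_aut_unitmx autF.
have isoFi := isometry_invmx isoF unitF.
have unitFi : invmx F \in unitmx by rewrite unitmx_inv.
have vFi : v *m invmx F = v by rewrite -{1}vF mulmxK.
have yF : cell_lift G setT x0 (y *m intmx R F) by rewrite -liftF; exists y.
have yFi : cell_lift G setT x0 (y *m intmx R (invmx F)).
  move: y_cell; rewrite -{1}liftF => -[w w_cell <-].
  by rewrite -mulmxA -map_mxM mulmxV // map_mx1 mulmx1.
exists y; split; first exact: (wall_point_reg_Lv Gsym x0reg vv2 y_cell yv y_wall).
- apply: (act_invariant unitF) => x.
    exact: (cell_Lv_mul Gsym x0reg timelike vv2 y_cell yv y_wall isoF unitF vF yF).
  exact: (cell_Lv_mul Gsym x0reg timelike vv2 y_cell yv y_wall isoFi unitFi vFi yFi).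
- apply: (act_invariant unitF) => x.
    exact: (cell_lift_Lv_mul Gsym x0reg timelike vv2 y_cell yv y_wall isoF unitF vF yF).
  exact: (cell_lift_Lv_mul Gsym x0reg timelike vv2 y_cell yv y_wall isoFi unitFi vFi yFi).
Qed.
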